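(* Let $h$ be a positive integer and $L$ an $h$-modular lattice with zero. For every $x\in\mathcal{A}'$ and every integer $k\geq d(x)$, $x^{(k)}=x^{(d(x))}$.
   Context: $K$ is the lattice consisting of $\varnothing$, $C=\{c\}$, $A_m=\{a_k:k\geq m\}$, $B_n=\{b_k:k\geq n\}$ ($m,n<\omega$), and $C\cup A_m\cup B_n$ with $|m-n|\leq1$, ordered by inclusion; $a_n,b_n,c$ denote $A_n,B_n,C$, so $\mathrm{J}(K)=\{c\}\cup\{a_n\}\cup\{b_n\}$ with $a_0>a_1>\cdots$, $b_0>b_1>\cdots$ and no other comparabilities. $\mathcal{A}$ is the set of antitone maps $x\colon\mathrm{J}(K)\to L$ with finite range. For $x\in\mathcal{A}$, $x(a_\infty)$, $x(b_\infty)$ are the eventual values of the increasing sequences $(x(a_n))$, $(x(b_n))$, and $d(x)$ is the least $d\geq0$ with $x(a_n)=x(a_\infty)$ and $x(b_n)=x(b_\infty)$ for all $n\geq d$. The map $x^{(1)}$ is defined by $x^{(1)}(c)=x(c)\vee(x(a_\infty)\wedge x(b_\infty))$, $x^{(1)}(a_0)=x(a_0)$, $x^{(1)}(b_0)=x(b_0)$, $x^{(1)}(a_{n+1})=x(a_{n+1})\vee(x(b_n)\wedge x(c))$, $x^{(1)}(b_{n+1})=x(b_{n+1})\vee(x(a_n)\wedge x(c))$; $\mathcal{A}$ is closed under $x\mapsto x^{(1)}$, and $x^{(0)}=x$, $x^{(k+1)}=(x^{(k)})^{(1)}$. Put $\ell(x)=\langle x(a_\infty),x(b_\infty),x(c)\rangle$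 and $\mathcal{A}'=\{x\in\mathcal{A}:\ell(x^{(1)})=\ell(x)\}$. $L$ is $h$-modular if $u^{(h+1)}=u^{(h)}$ for all $u\in L^3$, where $\langle x,y,z\rangle^{(1)}=\langle x\vee(y\wedge z),y\vee(x\wedge z),z\vee(x\wedge y)\rangle$. *)

From Stdlib Require Import ClassicalEpsilon.
From mathcomp Require Import all_boot all_order.
Set Implicit Arguments. Unset Strict Implicit. Unset Printing Implicit Defensive.
Import Order.TTheory.
Local Open Scope order_scope.

Inductive JK : Type := Jc | Ja of nat | Jb of nat.

(* order on J(K): a_0 > a_1 > ..., b_0 > b_1 > ..., no other comparabilities *)
Definition leJK (p q : JK) : bool :=
  match p, q with
  | Jc, Jc => true
  | Ja m, Ja n => (n <= m)%N
  | Jb m, Jb n => (n <= m)%N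
  | _, _ => false
  end.

Section Defs.
Context {disp : Order.disp_t} {L : bLatticeType disp}.

Definition inA (x : JK -> L) : Prop :=
  (forall p q, leJK p q -> x q <= x p) /\ (exists s : seq L, forall j, x j \in s).

Definition ainf (x : JK -> L) : L :=
  epsilon (inhabits \bot) (fun v => exists N, forall n, (N <= n)%N -> x (Ja n) = v).
Definition binf (x : JK -> L) : L :=
  epsilon (inhabits \bot) (fun v => exists N, forall n, (N <= n)%N -> x (Jb n) = v).

Definition stableFrom (x : JK -> L) (d : nat) : Prop :=
  forall n, (d <= n)%N -> x (Ja n) = ainf x /\ x (Jb n) = binf x.

Definition dx (x : JK -> L) : nat :=
  epsilon (inhabits 0%N) (fun d => stableFrom x d /\ forall d', stableFrom x d' -> (d <= d')%N).

Definition step (x : JK -> L) : JK -> L := fun j =>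
  match j with
  | Jc => x Jc `|` (ainf x `&` binf x)
  | Ja 0 => x (Ja 0)
  | Jb 0 => x (Jb 0)
  | Ja n.+1 => x (Ja n.+1) `|` (x (Jb n) `&` x Jc)
  | Jb n.+1 => x (Jb n.+1) `|` (x (Ja n) `&` x Jc)
  end.

Definition iterx (k : nat) (x : JK -> L) : JK -> L := iter k step x.

Definition ell (x : JK -> L) : L * L * L := (ainf x, binf x, x Jc).

Definition inA' (x : JK -> L) : Prop := inA x /\ ell (step x) = ell x.

Definition step3 (u : L * L * L) : L * L * L :=
  let: (x, y, z) := u in
  (x `|` (y `&` z), y `|` (x `&` z), z `|` (x `&` y)).

Definition hmodular (h : nat) : Prop :=
  forall u : L * L * L, iter h.+1 step3 u = iter h step3 u.

End Defs.

(** Write a = x(a_∞), b = x(b_∞), c = x(c).  The condition ℓ(x^(1)) = ℓ(x)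
    says exactly that b ∧ c ≤ a, a ∧ c ≤ b and a ∧ b ≤ c.  Under these
    inequalities every iterate x^(k) keeps the value c at c, stays below a
    (resp. b) on the a-chain (resp. b-chain), and equals a and b from index
    d(x) on.  Since x^(1)(a_(n+1)) depends only on the values at a_(n+1), b_n
    and c, and since joins are idempotent, an induction on n shows that the
    values at index n no longer change from stage n on.  Hence x^(k+1) = x^(k)
    as soon as k ≥ d(x).  No modularity is used. *)

From mathcomp Require Import all_boot all_order.
From Stdlib Require Import ClassicalEpsilon Classical FunctionalExtensionality Wf_nat.
Set Implicit Arguments. Unset Strict Implicit. Unset Printing Implicit Defensive.
Import Order.TTheory.
Local Open Scope order_scope.

Lemma values_in_seq_attained_below (T : eqType) (f : nat -> T) (s : seq T) :
  exists N, forall n, f n \in s -> exists2 m, (m <= N)%N & f m = f n.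
Proof.
elim: s => [|w s [N IH]]; first by exists 0%N.
have [[m fm] | not_attained] := classic (exists m, f m = w).
  exists (maxn N m) => n; rewrite inE => /orP[/eqP fn | /IH[m' m'N fm']].
    by exists m; rewrite ?leq_maxr // fm fn.
  by exists m'; first exact: leq_trans m'N (leq_maxl _ _).
exists N => n; rewrite inE => /orP[/eqP fn | /IH //].
by case: not_attained; exists n.
Qed.

Lemma nondecreasing_finite_range_stationary (d : Order.disp_t) (T : porderType d)
    (f : nat -> T) (s : seq T) :
  {homo f : m n / (m <= n)%N >-> m <= n} -> (forall n, f n \in s) ->
  exists N, forall n, (N <= n)%N -> f n = f N.
Proof.
move=> f_mono f_s; have [N attained] := values_in_seq_attained_below f s.
exists N => n Nn; have [m mN fm] := attained n (f_s n).
by apply: le_anti; rewrite -{1}fm (f_mono _ _ mN) (f_mono _ _ Nn).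
Qed.

Section Iteration.
Context {disp : Order.disp_t} {L : bLatticeType disp}.
Implicit Types (y : JK -> L) (a b c : L).

Lemma eventual_value_eq (f : nat -> L) N v :
  (forall n, (N <= n)%N -> f n = v) ->
  epsilon (inhabits \bot) (fun w => exists N, forall n, (N <= n)%N -> f n = w) = v.
Proof.
move=> fv; set P := fun w => exists N, forall n, (N <= n)%N -> f n = w.
have [|N' fw] := epsilon_spec (inhabits \bot) P; first by exists v, N.
by rewrite -(fw (maxn N N')) ?leq_maxr // fv // leq_maxl.
Qed.

Lemma ainf_eq y N v : (forall n, (N <= n)%N -> y (Ja n) = v) -> ainf y = v.
Proof. exact: (@eventual_value_eq (fun n => y (Ja n)) N v). Qed.

Lemma binf_eq y N v : (forall n, (N <= n)%N -> y (Jb n) = v) -> binf y = v.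
Proof. exact: (@eventual_value_eq (fun n => y (Jb n)) N v). Qed.

Lemma stableFrom_dx y : (exists d, stableFrom y d) -> stableFrom y (dx y).
Proof.
move=> stable.
have [d [[yd d_least] _]] :=
  dec_inh_nat_subset_has_unique_least_element _ (fun d => classic _) stable.
set P := fun d => stableFrom y d /\ forall d', stableFrom y d' -> (d <= d')%N.
have [] // := epsilon_spec (inhabits 0%N) P.
by exists d; split=> // d' /d_least /ssrnat.leP.
Qed.

Lemma inA_stableFrom_dx y : inA y -> stableFrom y (dx y).
Proof.
case=> y_anti [s y_s]; apply: stableFrom_dx.
have [Na ya] := @nondecreasing_finite_range_stationary _ _ (fun n => y (Ja n)) s
  (fun m n mn => y_anti (Ja n) (Ja m) mn) (fun n => y_s _).
have [Nb yb] := @nondecreasing_finite_range_stationary _ _ (fun n => y (Jb n)) s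
  (fun m n mn => y_anti (Jb n) (Jb m) mn) (fun n => y_s _).
exists (maxn Na Nb) => n /[dup].
move=> /(leq_trans (leq_maxl _ _)) Nan /(leq_trans (leq_maxr _ _)) Nbn.
by rewrite (ainf_eq ya) (binf_eq yb) ya ?yb.
Qed.

Lemma ainf_step y d :
  stableFrom y d -> ainf (step y) = ainf y `|` (binf y `&` y Jc).
Proof.
move=> y_stable; apply: (@ainf_eq _ d.+1) => -[//|n] dn /=.
by rewrite (y_stable _ (ltnW dn)).1 (y_stable _ dn).2.
Qed.

Lemma binf_step y d :
  stableFrom y d -> binf (step y) = binf y `|` (ainf y `&` y Jc).
Proof.
move=> y_stable; apply: (@binf_eq _ d.+1) => -[//|n] dn /=.
by rewrite (y_stable _ (ltnW dn)).2 (y_stable _ dn).1.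
Qed.

Lemma ell_step_meets y d : stableFrom y d -> ell (step y) = ell y ->
  [/\ binf y `&` y Jc <= ainf y, ainf y `&` y Jc <= binf y & ainf y `&` binf y <= y Jc].
Proof.
move=> y_stable; rewrite /ell (ainf_step y_stable) (binf_step y_stable) /=.
by case=> /join_idPl ? /join_idPl ? /join_idPl.
Qed.

Definition framed a b c d y : Prop :=
  [/\ y Jc = c, forall n, y (Ja n) <= a /\ y (Jb n) <= b
    & forall n, (d <= n)%N -> y (Ja n) = a /\ y (Jb n) = b].

Lemma inA_framed y : inA y -> framed (ainf y) (binf y) (y Jc) (dx y) y.
Proof.
move=> y_inA; have y_stable := inA_stableFrom_dx y_inA.
split=> // n; have [<- <-] := y_stable _ (leq_maxr n (dx y)).
by split; apply: y_inA.1; rewrite /= leq_maxl.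
Qed.

Lemma framed_step a b c d y :
  b `&` c <= a -> a `&` c <= b -> a `&` b <= c ->
  framed a b c d y -> framed a b c d (step y).
Proof.
move=> hbc hac hab [yc y_le y_stable].
have ya : ainf y = a by apply: (@ainf_eq _ d) => n /y_stable[].
have yb : binf y = b by apply: (@binf_eq _ d) => n /y_stable[].
have le_a n : y (Jb n) `&` y Jc <= a.
  by rewrite yc; apply: le_trans (leI2 (y_le n).2 (lexx c)) hbc.
have le_b n : y (Ja n) `&` y Jc <= b.
  by rewrite yc; apply: le_trans (leI2 (y_le n).1 (lexx c)) hac.
split; first by rewrite /= ya yb yc join_l.
- by case=> [|n] /=; [exact: y_le | rewrite !leUx le_a le_b (y_le n.+1).1 (y_le n.+1).2].
- case=> [|n] dn /=; first exact: y_stable.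
  by have [-> ->] := y_stable _ dn; rewrite !join_l.
Qed.

Lemma framed_iterx a b c d y k :
  b `&` c <= a -> a `&` c <= b -> a `&` b <= c ->
  framed a b c d y -> framed a b c d (iterx k y).
Proof. by move=> hbc hac hab y_framed; elim: k => // k; apply: framed_step. Qed.

Lemma step_step_Ja y n : step y Jc = y Jc -> step y (Jb n) = y (Jb n) ->
  step (step y) (Ja n.+1) = step y (Ja n.+1).
Proof. by move=> /= -> ->; rewrite -joinA joinxx. Qed.

Lemma step_step_Jb y n : step y Jc = y Jc -> step y (Ja n) = y (Ja n) ->
  step (step y) (Jb n.+1) = step y (Jb n.+1).
Proof. by move=> /= -> ->; rewrite -joinA joinxx. Qed.

Lemma iterx_frozen y : (forall k, iterx k y Jc = y Jc) ->
  forall n k, (n <= k)%N ->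
  iterx k.+1 y (Ja n) = iterx k y (Ja n) /\ iterx k.+1 y (Jb n) = iterx k y (Jb n).
Proof.
move=> c_const; elim=> [|n IH] [|k] // nk.
have [ea eb] := IH k nk.
have ec : step (iterx k y) Jc = iterx k y Jc := etrans (c_const k.+1) (esym (c_const k)).
by split; [apply: step_step_Ja | apply: step_step_Jb].
Qed.

Lemma iterx_succ_eq a b c d y : (forall k, framed a b c d (iterx k y)) ->
  forall k, (d <= k)%N -> iterx k.+1 y = iterx k y.
Proof.
move=> orbit_framed k dk.
have c_const k' : iterx k' y Jc = y Jc.
  by case: (orbit_framed k') => ->; case: (orbit_framed 0).
have tail k' n : (d <= n)%N -> iterx k' y (Ja n) = a /\ iterx k' y (Jb n) = b.
  by case: (orbit_framed k') => _ _; apply.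
apply: functional_extensionality => -[|n|n]; first by rewrite !c_const.
- have [dn | nd] := leqP d n; first by rewrite (tail k.+1 n dn).1 (tail k n dn).1.
  exact: (iterx_frozen c_const (leq_trans (ltnW nd) dk)).1.
- have [dn | nd] := leqP d n; first by rewrite (tail k.+1 n dn).2 (tail k n dn).2.
  exact: (iterx_frozen c_const (leq_trans (ltnW nd) dk)).2.
Qed.

End Iteration.

Theorem corollary5p6 (disp : Order.disp_t) (L : bLatticeType disp) (h : nat)
  (hpos : (0 < h)%N) (hmod : @hmodular disp L h)
  (x : JK -> L) (hx : inA' x) (k : nat) (hk : (dx x <= k)%N) :
  iterx k x = iterx (dx x) x.
Proof.
have [x_inA ell_x] := hx.
have [hbc hac hab] := ell_step_meets (inA_stableFrom_dx x_inA) ell_x.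
have orbit_framed k' := framed_iterx k' hbc hac hab (inA_framed x_inA).
elim: k hk => [|k IH]; first by rewrite leqn0 => /eqP ->.
rewrite leq_eqVlt => /orP[/eqP -> // | dk].
by rewrite (iterx_succ_eq orbit_framed dk) IH.
Qed.
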